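(* There is an absolute constant $c>0$ such that, for every graph $G=(V,E)$ on $n\ge2$ vertices, with $\alpha=c/\log n$, the edge set of $G$ can be decomposed into an edge-disjoint union of subgraphs $G_1\uplus G_2\uplus\cdots\uplus G_k$ such that (a) each vertex appears in at most $O(\log^2 n)$ of the subgraphs, and (b) each subgraph $G_i$ is an $\frac{\alpha}{4}$-weakly-regular $\alpha$-expander.
   Context: For a graph $H=(U,F)$ and $S\subseteq U$, $\mathrm{vol}(S)=\sum_{v\in S}\deg_H(v)$. $H$ is an $\alpha$-expander if for every $S\subseteq U$, $|F(S,U\setminus S)|\ge\alpha\min\{\mathrm{vol}(S),\mathrm{vol}(U\setminus S)\}$. For $\gamma\in[0,1]$, $H$ is $\gamma$-weakly-regular if every vertex of $H$ has degree at least $\gamma$ times the average degree $\frac{1}{|U|}\sum_{u\in U}\deg_H(u)$. The $O(\cdot)$ hides an absolute constant. *)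

From mathcomp Require Import all_boot.
From Stdlib Require Import Reals.
Set Implicit Arguments. Unset Strict Implicit. Unset Printing Implicit Defensive.

(* A finite simple graph is a symmetric irreflexive relation e on a finType V.
   Edges are represented as 2-element vertex sets. A subgraph H is given by its
   edge set F : {set {set V}}; its vertex set is the set of endpoints of F. *)
Section Graphs.
Variable V : finType.

Definition edge_set (e : rel V) : {set {set V}} :=
  [set [set x; y] | x in V, y in V & e x y].

Definition sg_vertices (F : {set {set V}}) : {set V} :=
  [set v | [exists f in F, v \in f]].

Definition sg_deg (F : {set {set V}}) (v : V) : nat :=
  #|[set f in F | v \in f]|.

Definition sg_vol (F : {set {set V}}) (S : {set V}) : nat :=
  \sum_(v in S) sg_deg F v.

Definition sg_cut (F : {set {set V}}) (S : {set V}) : nat :=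
  #|[set f in F | (f :&: S != set0) && (f :\: S != set0)]|.

Definition is_expander (alpha : R) (F : {set {set V}}) : Prop :=
  let U := sg_vertices F in
  forall S : {set V}, S \subset U ->
    (INR (sg_cut F S) >= alpha * Rmin (INR (sg_vol F S)) (INR (sg_vol F (U :\: S))))%R.

Definition weakly_regular (gamma : R) (F : {set {set V}}) : Prop :=
  let U := sg_vertices F in
  forall u : V, u \in U ->
    (INR (sg_deg F u) >= gamma * (INR (sg_vol F U) / INR #|U|))%R.

End Graphs.

From mathcomp Require Import all_boot.
From Stdlib Require Import Reals Lra Classical.
Set Implicit Arguments. Unset Strict Implicit. Unset Printing Implicit Defensive.

(* Give an edge set F the potential Phi(F) = |F| (2 ln |F| + ln |V(F)|).  If F is not
   already an (alpha/4)-weakly-regular alpha-expander, either some vertex u has degree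
   below (alpha/4) 2|F|/|V(F)|, and its edges are discarded, or some cut (S, V(F) \ S),
   with S the side of smaller volume, has fewer than alpha vol(S) crossing edges; these are
   discarded and both sides are decomposed recursively.  Deleting u lowers ln |V(F)| by at
   least 1/|V(F)|, and the smaller side of the cut has at most half of the edges, so its
   term 2 ln |F| drops by 2 ln 2 > 1.  In both cases 4 alpha times the drop of Phi pays for
   the discarded edges, so one round discards at most 4 alpha Phi(F) <= |F|/2 edges when
   alpha = 1/(40 ln n), while the pieces it keeps are vertex-disjoint.  Recursing on the
   discarded edges, which halve at each round, every vertex ends up in O(log n) pieces. *)

Section RealFacts.
Local Open Scope R_scope.

Lemma ln_le x y : 0 < x -> x <= y -> ln x <= ln y.
Proof. by move=> x_gt0 [/(ln_increasing _ _ x_gt0)/Rlt_le|->] //; apply: Rle_refl. Qed.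

Lemma ln_le_sub1 x : 0 < x -> ln x <= x - 1.
Proof.
move=> x_gt0; rewrite -(ln_exp (x - 1)); apply: ln_le => //.
by have := exp_ineq1_le (x - 1); lra.
Qed.

Lemma inv_le_ln_sub x : 1 < x -> / x <= ln x - ln (x - 1).
Proof.
move=> x_gt1; have q_gt0 : 0 < (x - 1) / x by apply: Rdiv_lt_0_compat; lra.
have -> : x - 1 = x * ((x - 1) / x) by field; lra.
rewrite ln_mult; [|lra|by []].
have := ln_le_sub1 q_gt0; have -> : (x - 1) / x - 1 = - / x by field; lra.
lra.
Qed.

(* Stdlib's [ln] vanishes at [0], so [ln (INR n)] is nonnegative and monotone on all of [nat]. *)
Lemma ln_INR0 : ln (INR 0) = 0.
Proof. by rewrite /ln; case: Rlt_dec => // /Rlt_irrefl []. Qed.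

Lemma ln_INR_ge0 (n : nat) : 0 <= ln (INR n).
Proof.
case: n => [|n]; first by rewrite ln_INR0; apply: Rle_refl.
by rewrite -ln_1; apply: ln_le; [lra | apply: (le_INR 1); apply/leP].
Qed.

Lemma ln_INR_le (m n : nat) : (m <= n)%nat -> ln (INR m) <= ln (INR n).
Proof.
case: m => [_|m le_mn]; first by rewrite ln_INR0; apply: ln_INR_ge0.
by apply: ln_le; [apply/lt_0_INR/ltP | apply: le_INR; apply/leP].
Qed.

Lemma INR_expn (m n : nat) : INR (expn m n) = INR m ^ n.
Proof. by elim: n => [//|n IHn]; rewrite expnS mult_INR IHn. Qed.

Lemma ln_INR_gt_half (n : nat) : (2 <= n)%nat -> / 2 < ln (INR n).
Proof.
move=> n_ge2; have := ln_INR_le n_ge2; rewrite (_ : INR 2 = 2); last by simpl; lra.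
by have := ln_lt_2; lra.
Qed.

Lemma trunc_log2_le_ln (n : nat) : (0 < n)%nat -> INR (trunc_log 2 n) <= 2 * ln (INR n).
Proof.
move=> n_gt0; have := ln_INR_le (trunc_logP (leqnn 2) n_gt0).
rewrite INR_expn (_ : INR 2 = 2) ?ln_pow; [|lra|by simpl; lra].
by have := ln_lt_2; have := pos_INR (trunc_log 2 n); nra.
Qed.

Lemma rounds_le_ln_sq (n : nat) : (2 <= n)%nat ->
  INR ((trunc_log 2 n).+1 + (trunc_log 2 n).+1) <= 16 * ln (INR n) ^ 2.
Proof.
move=> n_ge2; have := ln_INR_gt_half n_ge2; have := trunc_log2_le_ln (ltnW n_ge2).
by rewrite plus_INR !S_INR; nra.
Qed.

Definition budget (m u : nat) : R := 2 * ln (INR m) + ln (INR u).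

Lemma budget_ge0 m u : 0 <= budget m u.
Proof. by rewrite /budget; have := ln_INR_ge0 m; have := ln_INR_ge0 u; lra. Qed.

Lemma budget_le m m' u u' : (m <= m')%nat -> (u <= u')%nat -> budget m u <= budget m' u'.
Proof. by move=> /ln_INR_le le_m /ln_INR_le le_u; rewrite /budget; lra. Qed.

(* Because [2 ln 2 > 1]. *)
Lemma budget_half m m' u : (0 < m)%nat -> (m.*2 <= m')%nat -> budget m u + 1 <= budget m' u.
Proof.
move=> m_gt0 /ln_INR_le; rewrite -muln2 mult_INR (_ : INR 2 = 2) ?ln_mult //; last by simpl; lra.
- by rewrite /budget; have := ln_lt_2; lra.
- by apply: lt_0_INR; apply/ltP.
Qed.

Lemma budget_pred m u : (1 < u)%nat -> budget m u.-1 + / INR u <= budget m u.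
Proof.
case: u => [//|u] u_gt1; rewrite /budget [INR u.+1]S_INR -pred_Sn.
have u_gt0 : 0 < INR u by apply/lt_0_INR/ltP.
have := inv_le_ln_sub (x := INR u + 1); rewrite (_ : INR u + 1 - 1 = INR u); lra.
Qed.

Lemma charge_low_degree al m u d r Q B :
  0 <= al -> 0 < u -> 0 <= m -> d < al / 4 * (2 * m / u) ->
  r <= 4 * al * Q -> Q <= m * (B - / u) -> r + d <= 4 * al * (m * B).
Proof.
move=> al_ge0 u_gt0 m_ge0 low_d r_le Q_le.
have k_ge0 : 0 <= al * m * / u.
  by apply: Rmult_le_pos; [nra | left; apply: Rinv_0_lt_compat].
rewrite (_ : al / 4 * (2 * m / u) = al * m * / u / 2) in low_d; last by field; lra.
have : 4 * al * Q <= 4 * al * (m * (B - / u)) by apply: Rmult_le_compat_l; lra.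
lra.
Qed.

Lemma charge_sparse_cut al c m m1 m2 B r1 r2 Q1 Q2 :
  0 < al <= / 2 -> 0 <= c -> c < al * (2 * m1 + c) -> 0 <= m2 -> m1 + m2 <= m -> 0 <= B ->
  r1 <= 4 * al * Q1 -> Q1 <= m1 * (B - 1) -> r2 <= 4 * al * Q2 -> Q2 <= m2 * B ->
  r1 + r2 + c <= 4 * al * (m * B).
Proof.
move=> al_bd c_ge0 sparse m2_ge0 le_m B_ge0 r1_le Q1_le r2_le Q2_le.
have c_lt : c < 4 * al * m1 by nra.
have : 4 * al * Q1 <= 4 * al * (m1 * (B - 1)) by apply: Rmult_le_compat_l; lra.
have : 4 * al * Q2 <= 4 * al * (m2 * B) by apply: Rmult_le_compat_l; lra.
have : 4 * al * ((m1 + m2) * B) <= 4 * al * (m * B).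
  by apply: Rmult_le_compat_l; [lra | apply: Rmult_le_compat_r].
nra.
Qed.
End RealFacts.

Lemma card_sep_sum (T : finType) (A : {set T}) (P : pred T) :
  #|[set x in A | P x]| = \sum_(x in A) P x.
Proof.
rewrite -sum1_card [LHS]big_mkcond [RHS]big_mkcond; apply: eq_bigr => x _.
by rewrite inE; case: (x \in A); case: (P x).
Qed.

Lemma setDDK (T : finType) (A B : {set T}) : B \subset A -> A :\: (A :\: B) = B.
Proof. by move=> sBA; rewrite setDDr setDv set0U; apply/setIidPr. Qed.

Lemma mem_bigcup_seq (T : finType) (As : seq {set T}) x :
  (x \in \bigcup_(A <- As) A) = has (fun A : {set T} => x \in A) As.
Proof. by rewrite bigcup_seq; apply/bigcupP/hasP => -[A]; exists A. Qed.

Section EdgeFamilies.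
Variable V : finType.
Implicit Types (F G : {set {set V}}) (f S : {set V}).

Definition simple_edges F := {in F, forall f, #|f| = 2}.

Lemma simple_edgesS F G : F \subset G -> simple_edges G -> simple_edges F.
Proof. by move=> /subsetP sFG simG f /sFG /simG. Qed.

Lemma simple_edge_set (e : rel V) : irreflexive e -> simple_edges (edge_set e).
Proof.
move=> irr_e f /imset2P [x y _]; rewrite inE => exy ->.
have nxy : x != y by apply: contraTneq exy => ->; rewrite irr_e.
by rewrite cards2 nxy.
Qed.

Lemma card_simple_edges F : simple_edges F -> #|F| <= 'C(#|V|, 2).
Proof.
move=> simF; rewrite -card_draws; apply/subset_leq_card/subsetP => f Ff.
by rewrite inE simF.
Qed.

Lemma simple_edges_card_le F : simple_edges F -> #|F| <= #|V| * #|V|.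
Proof.
move=> /card_simple_edges /leq_trans; apply; rewrite bin2 leq_half_double.
by apply: leq_trans (leq_mul (leqnn _) (leq_pred _)) _; rewrite -addnn -addnS leq_addr.
Qed.

Lemma sg_verticesP F v : reflect (exists2 f, f \in F & v \in f) (v \in sg_vertices F).
Proof.
rewrite inE; apply: (iffP existsP) => [[f /andP[]]|[f Ff vf]]; first by exists f.
by exists f; rewrite Ff.
Qed.

Lemma sub_sg_vertices F f : f \in F -> f \subset sg_vertices F.
Proof. by move=> Ff; apply/subsetP => v vf; apply/sg_verticesP; exists f. Qed.

Lemma sg_vertices_sub F S : {in F, forall f, f \subset S} -> sg_vertices F \subset S.
Proof. by move=> sFS; apply/subsetP => v /sg_verticesP [f /sFS /subsetP]; apply. Qed.

Lemma sg_verticesS F G : F \subset G -> sg_vertices F \subset sg_vertices G.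
Proof. by move=> /subsetP sFG; apply: sg_vertices_sub => f /sFG /sub_sg_vertices. Qed.

Lemma two_le_card_sg_vertices F : simple_edges F -> F != set0 -> 1 < #|sg_vertices F|.
Proof.
move=> simF /set0Pn [f Ff].
by apply: leq_trans (subset_leq_card (sub_sg_vertices Ff)); rewrite simF.
Qed.

Lemma count_edge_le_vertex (Ps : seq {set {set V}}) f v : v \in f ->
  count (fun P : {set {set V}} => f \in P) Ps <= count (fun P => v \in sg_vertices P) Ps.
Proof. by move=> vf; apply: sub_count => P /= fP; apply/sg_verticesP; exists f. Qed.

Definition sg_inside F S := [set f in F | f \subset S].
Definition sg_crossing F S := [set f in F | (f :&: S != set0) && (f :\: S != set0)].

Lemma sg_inside_sub F S : sg_inside F S \subset F.
Proof. by apply/subsetP => f; rewrite inE => /andP[]. Qed.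

Lemma sg_vertices_inside F S : sg_vertices (sg_inside F S) \subset S.
Proof. by apply: sg_vertices_sub => f; rewrite inE => /andP[]. Qed.

Lemma sg_edge_cases F S :
  F \subset sg_inside F S :|: sg_inside F (sg_vertices F :\: S) :|: sg_crossing F S.
Proof.
apply/subsetP => f Ff; rewrite !inE Ff subsetD sub_sg_vertices //= -setI_eq0 -setD_eq0.
by case: (f :&: S == set0); case: (f :\: S == set0).
Qed.

Lemma sg_vol_edges F S : sg_vol F S = \sum_(f in F) #|f :&: S|.
Proof.
rewrite /sg_vol /sg_deg; under eq_bigr do rewrite card_sep_sum.
rewrite exchange_big; apply: eq_bigr => f _; rewrite -card_sep_sum.
by apply: eq_card => v; rewrite !inE andbC.
Qed.

Lemma card_edgeI f S : #|f| = 2 ->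
  #|f :&: S| = 2 * (f \subset S) + ((f :&: S != set0) && (f :\: S != set0)).
Proof.
move=> f2; have := cardsID S f; rewrite f2 -setD_eq0 -!card_gt0 -cards_eq0.
by move: #|f :&: S| #|f :\: S| => [|[|[|a]]] [|[|[|b]]].
Qed.

Lemma sg_vol_inside F S : simple_edges F -> sg_vol F S = 2 * #|sg_inside F S| + sg_cut F S.
Proof.
move=> simF; rewrite sg_vol_edges /sg_cut /sg_inside !card_sep_sum big_distrr -big_split.
by apply: eq_bigr => f Ff; rewrite card_edgeI ?simF.
Qed.

Lemma sg_vol_vertices F : simple_edges F -> sg_vol F (sg_vertices F) = 2 * #|F|.
Proof.
move=> simF; rewrite sg_vol_inside //.
have -> : sg_inside F (sg_vertices F) = F.
  by apply/setP => f; rewrite inE andb_idr // => /sub_sg_vertices.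
have -> : sg_cut F (sg_vertices F) = 0.
  apply: eq_card0 => f; rewrite !inE; apply/andP => -[Ff].
  by rewrite setD_eq0 sub_sg_vertices // andbF.
by rewrite addn0.
Qed.

Lemma sg_cut_setC F S : sg_cut F (sg_vertices F :\: S) = sg_cut F S.
Proof.
apply: eq_card => f; rewrite !inE; case Ff: (f \in F) => //=.
have sfU := sub_sg_vertices Ff.
rewrite setIDA (setIidPl sfU) setDDr.
have /eqP -> : f :\: sg_vertices F == set0 by rewrite setD_eq0.
by rewrite set0U andbC.
Qed.

Lemma card_sg_cut_partition F S : simple_edges F -> S \subset sg_vertices F ->
  #|F| = #|sg_inside F S| + #|sg_inside F (sg_vertices F :\: S)| + sg_cut F S.
Proof.
move=> simF sSU; have := sg_vol_vertices simF.
rewrite {1}/sg_vol (big_setID S) /= (setIidPr sSU) -!/(sg_vol F _).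
rewrite !sg_vol_inside // sg_cut_setC => /eqP.
by rewrite addnACA addnn -mul2n -!mulnDr eqn_pmul2l // => /eqP <-.
Qed.

Lemma card_sg_inside_lt F S : simple_edges F -> S \subset sg_vertices F ->
  0 < sg_vol F (sg_vertices F :\: S) -> #|sg_inside F S| < #|F|.
Proof.
move=> simF sSU; rewrite sg_vol_inside // sg_cut_setC (card_sg_cut_partition simF sSU).
move=> pos; rewrite -addnA -[X in X < _]addn0 ltn_add2l.
by case: #|sg_inside F (sg_vertices F :\: S)| pos => [|k]; rewrite ?muln0.
Qed.

Lemma count_sg_vertices_notin (Ps : seq {set {set V}}) S v :
  {in Ps, forall P, sg_vertices P \subset S} -> v \notin S ->
  count (fun P => v \in sg_vertices P) Ps = 0.
Proof.
move=> sPS vS; apply/eqP; rewrite -leqn0 leqNgt -has_count; apply/hasP => -[P /sPS /subsetP].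
by move=> sub /sub; apply/negP.
Qed.

Lemma count_sg_vertices_cat (Ps1 Ps2 : seq {set {set V}}) S :
  {in Ps1, forall P, sg_vertices P \subset S} -> {in Ps2, forall P, sg_vertices P \subset ~: S} ->
  (forall v, count (fun P => v \in sg_vertices P) Ps1 <= 1) ->
  (forall v, count (fun P => v \in sg_vertices P) Ps2 <= 1) ->
  forall v, count (fun P => v \in sg_vertices P) (Ps1 ++ Ps2) <= 1.
Proof.
move=> sub1 sub2 cnt1 cnt2 v; rewrite count_cat; have [vS|vS] := boolP (v \in S).
  by rewrite (count_sg_vertices_notin sub2) ?addn0 // inE vS.
by rewrite (count_sg_vertices_notin sub1 vS) add0n.
Qed.

Lemma not_weakly_regular (gamma : R) F : ~ weakly_regular gamma F ->
  exists2 u, u \in sg_vertices F &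
    (INR (sg_deg F u) < gamma * (INR (sg_vol F (sg_vertices F)) / INR #|sg_vertices F|))%R.
Proof.
move=> notWR; apply: NNPP => noLow; apply: notWR => U u uU.
by apply: Rnot_lt_ge => low; apply: noLow; exists u.
Qed.

Lemma not_expander (al : R) F : ~ is_expander al F ->
  exists2 S : {set V}, S \subset sg_vertices F &
    (INR (sg_cut F S) <
       al * Rmin (INR (sg_vol F S)) (INR (sg_vol F (sg_vertices F :\: S))))%R.
Proof.
move=> notExp; apply: NNPP => noSparse; apply: notExp => U S sSU.
by apply: Rnot_lt_ge => sparse; apply: noSparse; exists S.
Qed.

Definition potential F : R := (INR #|F| * budget #|F| #|sg_vertices F|)%R.

Lemma potential_ge0 F : (0 <= potential F)%R.
Proof. by apply: Rmult_le_pos; [apply: pos_INR | apply: budget_ge0]. Qed.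

Lemma potential_sub F G : G \subset F ->
  (potential G <= INR #|G| * budget #|F| #|sg_vertices F|)%R.
Proof.
move=> sGF; apply: Rmult_le_compat_l; first exact: pos_INR.
by apply: budget_le; apply: subset_leq_card; last apply: sg_verticesS.
Qed.

Lemma potential_sub_half F G : G \subset F -> #|G|.*2 <= #|F| ->
  (potential G <= INR #|G| * (budget #|F| #|sg_vertices F| - 1))%R.
Proof.
move=> sGF halfG; have [G0|G_gt0] := posnP #|G|.
  by rewrite /potential G0 /= !Rmult_0_l; apply: Rle_refl.
apply: Rmult_le_compat_l; first exact: pos_INR.
have := budget_half #|sg_vertices G| G_gt0 halfG.
have := budget_le (leqnn #|F|) (subset_leq_card (sg_verticesS sGF)).
by rewrite /Rminus; lra.
Qed.

Lemma potential_delete_vertex F u : simple_edges F -> u \in sg_vertices F ->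
  (potential (F :\: [set f in F | u \in f]) <=
   INR #|F| * (budget #|F| #|sg_vertices F| - / INR #|sg_vertices F|))%R.
Proof.
set U := sg_vertices F; set F' := F :\: _ => simF uU.
have [f Ff uf] := sg_verticesP _ _ uU.
have U_gt1 : 1 < #|U| by apply: two_le_card_sg_vertices => //; apply/set0Pn; exists f.
have U'_le : #|sg_vertices F'| <= #|U|.-1.
  rewrite (cardsD1 u U) uU /=; apply/subset_leq_card/sg_vertices_sub => g.
  rewrite !inE subsetD1 => /andP [notD Fg]; rewrite sub_sg_vertices //=.
  by apply: contra notD => ug; rewrite Fg.
have F'_le : #|F'| <= #|F| by apply/subset_leq_card/subsetDl.
have := budget_le F'_le U'_le; have := budget_pred #|F| U_gt1.
have := budget_ge0 #|F'| #|sg_vertices F'|.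
by move=> B_ge0 *; apply: Rmult_le_compat => //; [apply: pos_INR | apply/le_INR/leP | lra].
Qed.

End EdgeFamilies.

Section ExpanderLevel.
Variables (V : finType) (al : R).
Hypotheses (al_gt0 : (0 < al)%R) (al_le_half : (al <= / 2)%R).
Implicit Types (F G P : {set {set V}}) (S : {set V}) (Ps : seq {set {set V}}).

Definition regular_expander F := weakly_regular (al / 4) F /\ is_expander al F.

Definition expander_level F Ps : Prop :=
  [/\ {in Ps, forall P, P \subset F /\ regular_expander P},
      forall v, count (fun P => v \in sg_vertices P) Ps <= 1 &
      (INR #|F :\: \bigcup_(P <- Ps) P| <= 4 * al * potential F)%R].

Lemma expander_level_good F : regular_expander F -> expander_level F [:: F].
Proof.
move=> goodF; split.
- by move=> P; rewrite inE => /eqP ->.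
- by move=> v /=; case: (_ \in _).
- rewrite big_seq1 setDv cards0; apply: Rmult_le_pos; [lra | exact: potential_ge0].
Qed.

Lemma expander_level_low_degree F u Ps : simple_edges F -> u \in sg_vertices F ->
  (INR (sg_deg F u) <
     al / 4 * (INR (sg_vol F (sg_vertices F)) / INR #|sg_vertices F|))%R ->
  expander_level (F :\: [set f in F | u \in f]) Ps -> expander_level F Ps.
Proof.
move=> simF uU low [sub cnt rem]; split => //.
  by move=> P /sub [sPF goodP]; split => //; apply: subset_trans sPF (subsetDl _ _).
set B := \bigcup_(P <- Ps) P.
have rem_le : #|F :\: B| <= #|(F :\: [set f in F | u \in f]) :\: B| + sg_deg F u.
  apply: leq_trans (leq_card_setU _ [set f in F | u \in f]); apply/subset_leq_card/subsetP.
  by move=> f; rewrite !inE; case: (f \in B); case: (f \in F); case: (u \in f).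
have U_gt0 : (0 < INR #|sg_vertices F|)%R.
  by apply/lt_0_INR/ltP/card_gt0P; exists u.
rewrite sg_vol_vertices // mult_INR (_ : INR 2 = 2%R) // in low.
apply: Rle_trans; first by apply/le_INR/leP/rem_le.
rewrite plus_INR.
apply: charge_low_degree rem (potential_delete_vertex simF uU) => //; [lra | exact: pos_INR].
Qed.

Lemma expander_level_sparse_cut F S Ps1 Ps2 : simple_edges F -> S \subset sg_vertices F ->
  sg_vol F S <= sg_vol F (sg_vertices F :\: S) ->
  (INR (sg_cut F S) < al * INR (sg_vol F S))%R ->
  expander_level (sg_inside F S) Ps1 ->
  expander_level (sg_inside F (sg_vertices F :\: S)) Ps2 ->
  expander_level F (Ps1 ++ Ps2).
Proof.
set T := sg_vertices F :\: S; set F1 := sg_inside F S; set F2 := sg_inside F T.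
move=> simF sSU le_vol sparse [sub1 cnt1 rem1] [sub2 cnt2 rem2].
have sP1 : {in Ps1, forall P, P \subset F1} by move=> P /sub1 [].
have sP2 : {in Ps2, forall P, P \subset F2} by move=> P /sub2 [].
split.
- move=> P; rewrite mem_cat => /orP [/sub1|/sub2] [sP goodP];
    by split => //; apply: subset_trans sP (sg_inside_sub _ _).
- apply: (count_sg_vertices_cat (S := S)) cnt1 cnt2 => P.
    by move=> /sP1 /sg_verticesS /subset_trans; apply; apply: sg_vertices_inside.
  move=> /sP2 /sg_verticesS /subset_trans; apply.
  by apply: subset_trans (sg_vertices_inside _ _) _; rewrite /T setDE subsetIr.
set B1 := \bigcup_(P <- Ps1) P; set B2 := \bigcup_(P <- Ps2) P.
have rem_le : #|F :\: \bigcup_(P <- Ps1 ++ Ps2) P| <= #|F1 :\: B1| + #|F2 :\: B2| + sg_cut F S.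
  apply: leq_trans (leq_add (leq_card_setU _ _) (leqnn _)).
  apply: leq_trans (leq_card_setU _ (sg_crossing F S)); apply/subset_leq_card/subsetP => f.
  rewrite big_cat !inE negb_or => /andP [/andP [nB1 nB2] Ff].
  by move: (subsetP (sg_edge_cases F S) f Ff); rewrite !inE nB1 nB2.
have partition := card_sg_cut_partition simF sSU.
rewrite !sg_vol_inside // sg_cut_setC leq_add2r leq_pmul2l // in le_vol.
rewrite sg_vol_inside // plus_INR mult_INR (_ : INR 2 = 2%R) // in sparse.
apply: Rle_trans; first by apply/le_INR/leP/rem_le.
rewrite !plus_INR /potential.
have half1 : #|F1|.*2 <= #|F|.
  by rewrite -addnn partition -addnA leq_add2l (leq_trans le_vol) ?leq_addr.
apply: (charge_sparse_cut (m2 := INR #|F2|) _ _ sparse _ _ _ rem1 _ rem2).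
- by split.
- exact: pos_INR.
- exact: pos_INR.
- by rewrite -plus_INR; apply/le_INR/leP; rewrite partition leq_addr.
- exact: budget_ge0.
- exact: potential_sub_half (sg_inside_sub _ _) half1.
- exact: potential_sub (sg_inside_sub _ _).
Qed.

Lemma sparse_cut_small_side F S : S \subset sg_vertices F ->
  (INR (sg_cut F S) <
     al * Rmin (INR (sg_vol F S)) (INR (sg_vol F (sg_vertices F :\: S))))%R ->
  exists2 S' : {set V}, S' \subset sg_vertices F &
    sg_vol F S' <= sg_vol F (sg_vertices F :\: S') /\
    (INR (sg_cut F S') < al * INR (sg_vol F S'))%R.
Proof.
move=> sSU sparse; have [le_vol|lt_vol] := leqP (sg_vol F S) (sg_vol F (sg_vertices F :\: S)).
  by exists S => //; rewrite Rmin_left in sparse; last by apply/le_INR/leP.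
exists (sg_vertices F :\: S); first exact: subsetDl.
rewrite setDDK // sg_cut_setC (ltnW lt_vol); split => //.
by rewrite Rmin_right in sparse; last by apply/le_INR/leP/ltnW.
Qed.

Lemma exists_expander_level F : simple_edges F -> exists Ps, expander_level F Ps.
Proof.
have [k] := ubnP #|F|; elim: k F => // k IH F lt_Fk simF.
have IHsub G : G \subset F -> #|G| < #|F| -> exists Ps, expander_level G Ps.
  by move=> sGF lt_GF; apply: IH (leq_trans lt_GF lt_Fk) (simple_edgesS sGF simF).
have [goodF|/not_and_or [notWR|notExp]] := classic (regular_expander F).
- by exists [:: F]; apply: expander_level_good.
- have [u uU low] := not_weakly_regular notWR.
  have [f Ff uf] := sg_verticesP _ _ uU.
  have [|Ps lvl] := IHsub (F :\: [set f in F | u \in f]) (subsetDl _ _).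
    by apply/proper_card/properP; split; [exact: subsetDl | exists f; rewrite ?inE ?Ff ?uf].
  by exists Ps; apply: expander_level_low_degree lvl.
- have [S sSU sparse] := not_expander notExp.
  have [S' sS'U [le_vol sparse']] := sparse_cut_small_side sSU sparse.
  have vol_gt0 : 0 < sg_vol F S'.
    rewrite lt0n; apply/eqP => vol0; move: sparse'; rewrite vol0 /= Rmult_0_r.
    by have := pos_INR (sg_cut F S'); lra.
  have [|Ps1 lvl1] := IHsub _ (sg_inside_sub F S').
    exact: card_sg_inside_lt simF sS'U (leq_trans vol_gt0 le_vol).
  have [|Ps2 lvl2] := IHsub _ (sg_inside_sub F (sg_vertices F :\: S')).
    by apply: card_sg_inside_lt simF (subsetDl _ _) _; rewrite setDDK.
  by exists (Ps1 ++ Ps2); apply: expander_level_sparse_cut lvl1 lvl2.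
Qed.
End ExpanderLevel.

Section Rounds.
Variables (V : finType) (al : R).
Implicit Types (F P : {set {set V}}) (Ps : seq {set {set V}}).
Hypothesis halving_level : forall F, simple_edges F ->
  exists Ps, expander_level al F Ps /\ #|F :\: \bigcup_(P <- Ps) P|.*2 <= #|F|.

Lemma expander_decomposition p F : simple_edges F -> #|F| < expn 2 p ->
  exists Gs : seq {set {set V}},
    [/\ {in Gs, forall P, regular_expander al P},
        forall f, count (fun P => f \in P) Gs <= 1,
        \bigcup_(P <- Gs) P = F &
        forall v, count (fun P => v \in sg_vertices P) Gs <= p].
Proof.
elim: p F => [|p IH] F simF ltF.
  exists [::]; split => //; rewrite big_nil.
  by apply/esym/eqP; rewrite -cards_eq0 -leqn0 -ltnS.
have [Ps [[sub cnt _] half]] := halving_level simF.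
set B := \bigcup_(P <- Ps) P in half.
have sBF : B \subset F by rewrite /B bigcup_seq; apply/bigcupsP => P /sub [].
have [|Gs [good cntG covG cntvG]] := IH (F :\: B) (simple_edgesS (subsetDl _ _) simF).
  by rewrite -ltn_double (leq_ltn_trans half) // -mul2n -expnS.
exists (Ps ++ Gs); split.
- by move=> P; rewrite mem_cat => /orP [/sub [] | /good].
- move=> f; rewrite count_cat; have [fB|fB] := boolP (f \in B).
    have /eqP -> : count (fun P => f \in P) Gs == 0.
      by rewrite -leqn0 leqNgt -has_count -mem_bigcup_seq covG inE fB.
    have /set0Pn [x xf] : f != set0 by rewrite -card_gt0 simF ?(subsetP sBF).
    by rewrite addn0; apply: leq_trans (count_edge_le_vertex _ xf) (cnt x).
  have /eqP -> : count (fun P => f \in P) Ps == 0.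
    by rewrite -leqn0 leqNgt -has_count -mem_bigcup_seq.
  exact: cntG.
- rewrite big_cat covG /=; apply/setP => f; rewrite !inE.
  by case: (boolP (f \in B)) => [/(subsetP sBF) ->|].
- by move=> v; rewrite count_cat -add1n leq_add.
Qed.
End Rounds.

Lemma count_le1_nth (T : Type) (a : pred T) (s : seq T) x0 i j : count a s <= 1 ->
  i < size s -> j < size s -> a (nth x0 s i) -> a (nth x0 s j) -> i = j.
Proof.
elim: s i j => [|x s IHs] [|i] [|j] //= cnt_le lt_i lt_j ai aj.
- move: cnt_le; rewrite ai add1n ltnS leqNgt -has_count => /negP [].
  by apply/(has_nthP x0); exists j.
- move: cnt_le; rewrite aj add1n ltnS leqNgt -has_count => /negP [].
  by apply/(has_nthP x0); exists i.
- by congr _.+1; apply: IHs (leq_trans (leq_addl _ _) cnt_le) _ _ ai aj.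
Qed.

Lemma halving_expander_level (V : finType) : (2 <= #|V|)%nat ->
  forall F : {set {set V}}, simple_edges F ->
  exists Ps, expander_level (/ 40 / ln (INR #|V|)) F Ps /\
             #|F :\: \bigcup_(P <- Ps) P|.*2 <= #|F|.
Proof.
set L := ln (INR #|V|) => n_ge2 F simF; have L_gt : (/ 2 < L)%R := ln_INR_gt_half n_ge2.
have al_gt0 : (0 < / 40 / L)%R by apply: Rdiv_lt_0_compat; lra.
have al_le : (/ 40 / L <= / 2)%R.
  by rewrite (_ : / 40 / L = / (40 * L))%R; [apply: Rinv_le_contravar | field]; lra.
have [Ps lvl] := exists_expander_level al_gt0 al_le simF.
exists Ps; split => //; case: lvl => _ _ rem.
have Q_le : (potential F <= INR #|F| * (5 * L))%R.
  apply: Rle_trans (potential_sub (subxx F)) (Rmult_le_compat_l _ _ _ (pos_INR _) _).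
  apply: Rle_trans (budget_le (simple_edges_card_le simF) (max_card _)) _.
  rewrite /budget mult_INR ln_mult -/L; [lra | |]; apply/lt_0_INR/ltP; exact: ltnW.
have := Rmult_le_compat_l _ _ _ (Rlt_le _ _ al_gt0) Q_le.
rewrite (_ : / 40 / L * (INR #|F| * (5 * L)) = INR #|F| / 8)%R; last by field; lra.
move=> aQ_le; apply/leP/INR_le; rewrite -mul2n mult_INR (_ : INR 2 = 2%R); last by simpl; lra.
lra.
Qed.

Theorem mainTheorem5 :
  exists c : R, (0 < c)%R /\
  exists C : R, (0 < C)%R /\
  forall (V : finType) (e : rel V),
    symmetric e -> irreflexive e -> 2 <= #|V| ->
    let n := #|V| in
    let alpha := (c / ln (INR n))%R in
    exists Gs : seq {set {set V}},
      (* edge-disjoint decomposition of the edge set of G *)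
      (forall i j, i < size Gs -> j < size Gs -> i <> j ->
         [disjoint nth set0 Gs i & nth set0 Gs j]) /\
      \bigcup_(F <- Gs) F = edge_set e /\
      (* (a) each vertex appears in at most C log^2 n subgraphs *)
      (forall v : V,
         (INR (count (fun F => v \in sg_vertices F) Gs) <= C * (ln (INR n)) ^ 2)%R) /\
      (* (b) each subgraph is an alpha/4-weakly-regular alpha-expander *)
      (forall F, F \in Gs -> weakly_regular (alpha / 4) F /\ is_expander alpha F).
Proof.
exists (/ 40)%R; split; first lra.
exists 16%R; split; first lra.
move=> V e _ irr_e n_ge2 n alpha; set t := trunc_log 2 n.
have simE := simple_edge_set irr_e.
have ltE : #|edge_set e| < expn 2 (t.+1 + t.+1).
  rewrite expnD; apply: leq_ltn_trans (simple_edges_card_le simE) _.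
  by apply: ltn_mul; apply: trunc_log_ltn.
have [Gs [good cnt_e cov cnt_v]] :=
  expander_decomposition (halving_expander_level n_ge2) simE ltE.
exists Gs; split.
  move=> i j lt_i lt_j neq_ij; rewrite disjoints_subset.
  apply/subsetP => f fi; rewrite inE; apply/negP => fj.
  exact: neq_ij (count_le1_nth (cnt_e f) lt_i lt_j fi fj).
split; first exact: cov.
split; last exact: good.
by move=> v; apply: Rle_trans (rounds_le_ln_sq n_ge2); apply/le_INR/leP/cnt_v.
Qed.
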